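(* (i) If $N=2$, the infeasible SINR region $\Upsilon^c=\mathbb R_+^2\setminus\Upsilon$ is convex; explicitly, $\Upsilon=\{(\mu_1,\mu_2)\in\mathbb R_+^2:\mu_1\mu_2<\frac{g_{r_1^{k_1^*},t_1}}{g_{r_1^{k_1^*},t_2}}\cdot\frac{g_{r_2^{k_2^*},t_2}}{g_{r_2^{k_2^*},t_1}}\}$ where $k_i^*\in\arg\max_{k\in\mathcal K_i}g_{r_i^{k},t_j}/g_{r_i^{k},t_i}$ ($j\neq i$), assuming all cross gains are positive. (ii) For $N\geq 3$ this need not hold: for the system with $N=3$, $K_1=K_2=K_3=2$ and gains $(g_{r,t_1},g_{r,t_2},g_{r,t_3})$ equal to $(1,0.5,0.1)$ for $R_1^1$, $(1,0.1,0.5)$ for $R_1^2$, $(0.5,1,0.1)$ for $R_2^1$, $(0.1,1,0.5)$ for $R_2^2$, $(0.5,0.1,1)$ for $R_3^1$, $(0.1,0.5,1)$ for $R_3^2$, the set $\Upsilon^c$ is not convex.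
   Context: Multicast system: $N$ transmitters $T_1,\dots,T_N$; transmitter $T_i$ has $K_i\geq1$ receivers $R_i^{k}$, $k\in\mathcal K_i=\{1,\dots,K_i\}$. Channel gains $g_{r_i^{k},t_j}\geq 0$ (from $T_j$ to $R_i^k$) with $g_{r_i^{k},t_i}>0$; noise variance $\sigma^2>0$. For $\mathbf p\geq\mathbf 0$: $\gamma_i^{k}(\mathbf p)=\frac{g_{r_i^{k},t_i}p_i}{\sum_{j\neq i}g_{r_i^{k},t_j}p_j+\sigma^2}$, $\gamma_i(\mathbf p)=\min_{k\in\mathcal K_i}\gamma_i^k(\mathbf p)$, $\Gamma(\mathbf p)=(\gamma_1(\mathbf p),\dots,\gamma_N(\mathbf p))$. The feasible SINR region (no power constraint) is $\Upsilon=\{\Gamma(\mathbf p):\mathbf p\in\mathbb R^N,\mathbf p\geq\mathbf 0\}\subseteq\mathbb R_+^N$, and $\Upsilon^c=\mathbb R_+^N\setminus\Upsilon$ is the infeasible SINR region. *)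

From Stdlib Require Import Reals Lra Lia.
Open Scope R_scope.

(* Indexing conventions (0-based):
   transmitters/receiver groups i = 0..N-1, receivers k = 0..K i - 1,
   g i k j = g_{r_i^{k+1}, t_{j+1}} (gain from T_{j+1} to R_{i+1}^{k+1}).
   Power vectors and SINR vectors are functions nat -> R; only entries < N matter. *)

Fixpoint sum_lt (n : nat) (f : nat -> R) : R :=
  match n with
  | O => 0
  | S m => sum_lt m f + f m
  end.

Fixpoint min_upto (n : nat) (f : nat -> R) : R :=
  match n with
  | O => f O
  | S m => Rmin (min_upto m f) (f (S m))
  end.

Definition sinr_k (N : nat) (g : nat -> nat -> nat -> R) (sigma2 : R)
  (p : nat -> R) (i k : nat) : R :=
  g i k i * p i /
  (sum_lt N (fun j => if Nat.eqb j i then 0 else g i k j * p j) + sigma2).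

(* gamma_i(p) = min_{k in K_i} gamma_i^k(p)  (K i >= 1) *)
Definition sinr (N : nat) (K : nat -> nat) (g : nat -> nat -> nat -> R)
  (sigma2 : R) (p : nat -> R) (i : nat) : R :=
  min_upto (K i - 1) (fun k => sinr_k N g sigma2 p i k).

Definition valid_system (N : nat) (K : nat -> nat) (g : nat -> nat -> nat -> R)
  (sigma2 : R) : Prop :=
  0 < sigma2 /\
  (forall i, (i < N)%nat -> (1 <= K i)%nat) /\
  (forall i k j, (i < N)%nat -> (k < K i)%nat -> (j < N)%nat -> 0 <= g i k j) /\
  (forall i k, (i < N)%nat -> (k < K i)%nat -> 0 < g i k i).

Definition nonneg_vec (N : nat) (v : nat -> R) : Prop :=
  forall i, (i < N)%nat -> 0 <= v i.

Definition feasible (N : nat) (K : nat -> nat) (g : nat -> nat -> nat -> R)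
  (sigma2 : R) (mu : nat -> R) : Prop :=
  exists p : nat -> R, nonneg_vec N p /\
    forall i, (i < N)%nat -> mu i = sinr N K g sigma2 p i.

Definition infeasible (N : nat) (K : nat -> nat) (g : nat -> nat -> nat -> R)
  (sigma2 : R) (mu : nat -> R) : Prop :=
  nonneg_vec N mu /\ ~ feasible N K g sigma2 mu.

Definition convex_set (N : nat) (S : (nat -> R) -> Prop) : Prop :=
  forall (x y : nat -> R) (t : R), S x -> S y -> 0 <= t <= 1 ->
    forall z : nat -> R,
      (forall i, (i < N)%nat -> z i = t * x i + (1 - t) * y i) -> S z.

Definition K_ex (i : nat) : nat := 2.

Definition g_ex (i k j : nat) : R :=
  match i, k, j return R with
  | 0%nat,0%nat,0%nat => 1 | 0%nat,0%nat,1%nat => /2 | 0%nat,0%nat,2%nat => /10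
  | 0%nat,1%nat,0%nat => 1 | 0%nat,1%nat,1%nat => /10 | 0%nat,1%nat,2%nat => /2
  | 1%nat,0%nat,0%nat => /2 | 1%nat,0%nat,1%nat => 1 | 1%nat,0%nat,2%nat => /10
  | 1%nat,1%nat,0%nat => /10 | 1%nat,1%nat,1%nat => 1 | 1%nat,1%nat,2%nat => /2
  | 2%nat,0%nat,0%nat => /2 | 2%nat,0%nat,1%nat => /10 | 2%nat,0%nat,2%nat => 1
  | 2%nat,1%nat,0%nat => /10 | 2%nat,1%nat,1%nat => /2 | 2%nat,1%nat,2%nat => 1
  | _, _, _ => 0
  end.

From Stdlib Require Import Reals Lra Lia Ranalysis5.
Open Scope R_scope.

(* Necessity holds for any pair of users
   of any system: bounding both SINRs by single receivers, the product becomes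
   [u / (u + s) * v / (v + s) < 1].  Sufficiency: the power of user 0 needed
   for [mu0] is a continuous function of the power [x] of user 1, and the SINR
   of user 1 then grows from 0 to above [mu1] as [x] increases, so the
   intermediate value theorem gives an exact solution.  The infeasible region
   is thus the part of the positive quadrant above a hyperbola, a convex set.
   In the three-user example the pairwise bound separates two points from the
   feasible region through different pairs of users, while their midpoint is
   feasible. *)

Lemma min_upto_le n f k : (k <= n)%nat -> min_upto n f <= f k.
Proof.
  induction n as [|n IH]; intro Hk; simpl.
  - replace k with 0%nat by lia; lra.
  - destruct (Nat.eq_dec k (S n)) as [->|].
    + apply Rmin_r.
    + eapply Rle_trans; [apply Rmin_l | apply IH; lia].
Qed.

Lemma min_upto_glb n f c : (forall k, (k <= n)%nat -> c <= f k) -> c <= min_upto n f.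
Proof.
  induction n as [|n IH]; intro H; simpl.
  - apply H; lia.
  - apply Rmin_glb; [apply IH; intros; apply H | apply H]; lia.
Qed.

Lemma min_upto_glb_lt n f c : (forall k, (k <= n)%nat -> c < f k) -> c < min_upto n f.
Proof.
  induction n as [|n IH]; intro H; simpl.
  - apply H; lia.
  - apply Rmin_glb_lt; [apply IH; intros; apply H | apply H]; lia.
Qed.

Lemma min_upto_ext n f h : (forall k, (k <= n)%nat -> f k = h k) -> min_upto n f = min_upto n h.
Proof.
  induction n as [|n IH]; intro H; simpl.
  - apply H; lia.
  - rewrite IH by (intros; apply H; lia). rewrite H by lia. reflexivity.
Qed.

Lemma min_upto_scale n f x : 0 <= x -> min_upto n (fun k => x * f k) = x * min_upto n f.
Proof.
  intro Hx; induction n as [|n IH]; simpl; [reflexivity|].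
  rewrite IH.
  destruct (Rle_dec (min_upto n f) (f (S n))) as [H|H];
    [rewrite !Rmin_left | rewrite !Rmin_right]; try reflexivity; nra.
Qed.

Lemma continuity_pt_Rmin (f h : R -> R) x : continuity_pt f x -> continuity_pt h x ->
  continuity_pt (fun y => Rmin (f y) (h y)) x.
Proof.
  intros Hf Hh.
  apply continuity_pt_locally_ext with (a := 1) (f := fun y => (f y + h y - Rabs (f y - h y)) / 2).
  - lra.
  - intros y _. unfold Rmin. destruct (Rle_dec (f y) (h y)).
    + rewrite Rabs_left1 by lra. field.
    + rewrite Rabs_right by lra. field.
  - reg.
Qed.

Lemma continuity_pt_min_upto n (F : R -> nat -> R) x :
  (forall k, (k <= n)%nat -> continuity_pt (fun y => F y k) x) ->
  continuity_pt (fun y => min_upto n (F y)) x.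
Proof.
  induction n as [|n IH]; intro H; simpl.
  - apply H; lia.
  - apply (continuity_pt_Rmin (fun y => min_upto n (F y)) (fun y => F y (S n))).
    + apply IH; intros; apply H; lia.
    + apply H; lia.
Qed.

Lemma exists_argmax_upto n (f : nat -> R) :
  exists k, (k <= n)%nat /\ forall j, (j <= n)%nat -> f j <= f k.
Proof.
  induction n as [|n [k [Hk H]]].
  - exists 0%nat; split; [lia|]. intros j Hj; replace j with 0%nat by lia; lra.
  - destruct (Rle_dec (f k) (f (S n))).
    + exists (S n); split; [lia|]. intros j Hj.
      destruct (Nat.eq_dec j (S n)) as [->|]; [lra|].
      eapply Rle_trans; [apply H; lia | lra].
    + exists k; split; [lia|]. intros j Hj.
      destruct (Nat.eq_dec j (S n)) as [->|]; [lra | apply H; lia].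
Qed.

Lemma sum_lt_nonneg n f : (forall l, (l < n)%nat -> 0 <= f l) -> 0 <= sum_lt n f.
Proof.
  induction n as [|n IH]; intro Hf; simpl; [lra|].
  assert (0 <= f n) by (apply Hf; lia).
  assert (0 <= sum_lt n f) by (apply IH; intros; apply Hf; lia).
  lra.
Qed.

Lemma sum_lt_ge_term n f j : (forall l, (l < n)%nat -> 0 <= f l) -> (j < n)%nat ->
  f j <= sum_lt n f.
Proof.
  induction n as [|n IH]; intros Hf Hj; simpl; [lia|].
  assert (0 <= f n) by (apply Hf; lia).
  destruct (Nat.eq_dec j n) as [->|].
  - assert (0 <= sum_lt n f) by (apply sum_lt_nonneg; intros; apply Hf; lia). lra.
  - assert (f j <= sum_lt n f) by (apply IH; [intros; apply Hf|]; lia). lra.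
Qed.

Lemma continuous_attains f M mu : 0 <= M ->
  (forall x, 0 <= x <= M -> continuity_pt f x) ->
  f 0 = 0 -> 0 <= mu -> mu < f M -> exists x, 0 <= x /\ f x = mu.
Proof.
  intros HM Hf H0 Hmu HfM.
  destruct (Req_dec mu 0) as [->|Hne]; [exists 0; split; [lra | exact H0]|].
  assert (0 < M) by (destruct HM as [|<-]; [assumption | lra]).
  destruct (IVT_interv (fun x => f x - mu) 0 M) as [x [Hx Ex]]; try lra.
  - intros a Ha. apply continuity_pt_minus; [apply Hf; lra|].
    apply continuity_pt_const. intros ? ?; reflexivity.
  - exists x; split; lra.
Qed.

Lemma hyperbola_superlevel_convex x0 x1 y0 y1 c t :
  0 <= x0 -> 0 <= x1 -> 0 <= y0 -> 0 <= y1 -> 0 <= c ->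
  1 <= x0 * x1 * c -> 1 <= y0 * y1 * c -> 0 <= t <= 1 ->
  1 <= (t * x0 + (1 - t) * y0) * (t * x1 + (1 - t) * y1) * c.
Proof.
  intros Hx0 Hx1 Hy0 Hy1 Hc Hx Hy Ht.
  set (u := c * (x0 * y1 + y0 * x1)).
  assert (Hu : 2 <= u).
  { assert (0 <= u) by (unfold u; apply Rmult_le_pos; nra).
    assert (u * u - 4 * ((x0 * x1 * c) * (y0 * y1 * c)) = (c * (x0 * y1 - y0 * x1)) ^ 2)
      by (unfold u; ring).
    pose proof (pow2_ge_0 (c * (x0 * y1 - y0 * x1))). nra. }
  replace ((t * x0 + (1 - t) * y0) * (t * x1 + (1 - t) * y1) * c)
    with (t * t * (x0 * x1 * c) + (1 - t) * (1 - t) * (y0 * y1 * c) + t * (1 - t) * u)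
    by (unfold u; ring).
  assert (t * t * 1 <= t * t * (x0 * x1 * c)) by (apply Rmult_le_compat_l; nra).
  assert ((1 - t) * (1 - t) * 1 <= (1 - t) * (1 - t) * (y0 * y1 * c))
    by (apply Rmult_le_compat_l; nra).
  assert (t * (1 - t) * 2 <= t * (1 - t) * u) by (apply Rmult_le_compat_l; nra).
  nra.
Qed.

Lemma lt_1_mul_ratios_iff P a b c d : 0 < a -> 0 < b -> 0 < c -> 0 < d ->
  P * (b / a * (d / c)) < 1 <-> P < a / b * (c / d).
Proof.
  intros Ha Hb Hc Hd.
  assert (Hq : 0 < b / a * (d / c)) by (apply Rmult_lt_0_compat; apply Rdiv_lt_0_compat; lra).
  replace (a / b * (c / d)) with (/ (b / a * (d / c))) by (field; lra).
  split; intro H.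
  - apply Rmult_lt_reg_r with (b / a * (d / c)); [lra|]. rewrite Rinv_l; lra.
  - apply Rmult_lt_compat_r with (r := b / a * (d / c)) in H; [|lra]. rewrite Rinv_l in H; lra.
Qed.

Definition cross_ratio (g : nat -> nat -> nat -> R) (i k j : nat) : R := g i k j / g i k i.

Lemma frac_lt_1 u s : 0 <= u -> 0 < s -> 0 <= u / (u + s) < 1.
Proof.
  intros Hu Hs. split.
  - apply Rle_mult_inv_pos; lra.
  - apply Rmult_lt_reg_r with (u + s); [lra|]. field_simplify; lra.
Qed.

Lemma link_product_lt a b c d p q s :
  0 < a -> 0 <= b -> 0 < c -> 0 <= d -> 0 <= p -> 0 <= q -> 0 < s ->
  a * p / (b * q + s) * (c * q / (d * p + s)) * (b / a * (d / c)) < 1.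
Proof.
  intros. replace (a * p / (b * q + s) * (c * q / (d * p + s)) * (b / a * (d / c)))
    with (d * p / (d * p + s) * (b * q / (b * q + s))) by (field; repeat split; nra).
  pose proof (frac_lt_1 (d * p) s). pose proof (frac_lt_1 (b * q) s). nra.
Qed.

Section Links.
Variables (N : nat) (K : nat -> nat) (g : nat -> nat -> nat -> R) (s : R).
Hypothesis Hvalid : valid_system N K g s.

Lemma sinr_le_link p i j k :
  nonneg_vec N p -> (i < N)%nat -> (j < N)%nat -> i <> j -> (k < K i)%nat ->
  sinr N K g s p i <= g i k i * p i / (g i k j * p j + s).
Proof.
  intros Hp Hi Hj Hij Hk. destruct Hvalid as (Hs & HK & Hg & Hgd).
  eapply Rle_trans; [apply (min_upto_le _ _ k); lia|]. unfold sinr_k.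
  set (f := fun l => if Nat.eqb l i then 0 else g i k l * p l).
  assert (Hf : forall l, (l < N)%nat -> 0 <= f l).
  { intros l Hl. unfold f. destruct (Nat.eqb l i); [lra|].
    apply Rmult_le_pos; [apply Hg | apply Hp]; auto. }
  assert (Hfj : f j = g i k j * p j) by (unfold f; apply Nat.eqb_neq in Hij;
    rewrite Nat.eqb_sym, Hij; reflexivity).
  pose proof (sum_lt_ge_term N f j Hf Hj).
  assert (0 <= g i k j * p j) by (apply Rmult_le_pos; [apply Hg | apply Hp]; auto).
  assert (0 <= g i k i * p i) by (apply Rmult_le_pos; [left; apply Hgd | apply Hp]; auto).
  unfold Rdiv. apply Rmult_le_compat_l; [assumption|].
  apply Rinv_le_contravar; lra.
Qed.

Lemma feasible_link_product_lt mu i j k l :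
  nonneg_vec N mu -> feasible N K g s mu ->
  (i < N)%nat -> (j < N)%nat -> i <> j -> (k < K i)%nat -> (l < K j)%nat ->
  mu i * mu j * (cross_ratio g i k j * cross_ratio g j l i) < 1.
Proof.
  intros Hmu [p [Hp Hsinr]] Hi Hj Hij Hk Hl.
  destruct Hvalid as (Hs & HK & Hg & Hgd).
  pose proof (Hmu i Hi). pose proof (Hmu j Hj).
  assert (Hmui : mu i <= g i k i * p i / (g i k j * p j + s))
    by (rewrite Hsinr by assumption; apply sinr_le_link; auto).
  assert (Hmuj : mu j <= g j l j * p j / (g j l i * p i + s))
    by (rewrite Hsinr by assumption; apply sinr_le_link; auto).
  assert (0 <= cross_ratio g i k j * cross_ratio g j l i).
  { unfold cross_ratio. apply Rmult_le_pos; apply Rle_mult_inv_pos; auto. }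
  eapply Rle_lt_trans; [|apply (link_product_lt (g i k i) (g i k j) (g j l j) (g j l i) (p i) (p j) s); auto].
  apply Rmult_le_compat_r; [assumption|]. apply Rmult_le_compat; assumption.
Qed.

Lemma infeasible_of_link_product mu i j k l :
  nonneg_vec N mu ->
  (i < N)%nat -> (j < N)%nat -> i <> j -> (k < K i)%nat -> (l < K j)%nat ->
  1 <= mu i * mu j * (cross_ratio g i k j * cross_ratio g j l i) ->
  infeasible N K g s mu.
Proof.
  intros Hmu Hi Hj Hij Hk Hl H1. split; [assumption|]. intro Hf.
  pose proof (feasible_link_product_lt mu i j k l Hmu Hf Hi Hj Hij Hk Hl). lra.
Qed.

End Links.

Section TwoUsers.
Variables (K : nat -> nat) (g : nat -> nat -> nat -> R) (s : R).
Hypothesis Hvalid : valid_system 2 K g s.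

Definition unit_sinr (i j : nat) (y : R) : R :=
  min_upto (K i - 1) (fun k => g i k i / (g i k j * y + s)).

Lemma noise_pos : 0 < s.
Proof. apply Hvalid. Qed.

Lemma gain_nonneg_direct_pos i k j : (i < 2)%nat -> (k <= K i - 1)%nat -> (j < 2)%nat ->
  0 <= g i k j /\ 0 < g i k i.
Proof.
  intros Hi Hk Hj. destruct Hvalid as (_ & HK & Hg & Hgd).
  pose proof (HK i Hi). split; [apply Hg | apply Hgd]; lia.
Qed.

Lemma sinr_two_users p i : nonneg_vec 2 p -> (i < 2)%nat ->
  sinr 2 K g s p i = p i * unit_sinr i (1 - i)%nat (p (1 - i)%nat).
Proof.
  intros Hp Hi. unfold unit_sinr. rewrite <- min_upto_scale by (apply Hp; exact Hi).
  unfold sinr. apply min_upto_ext. intros k _. unfold sinr_k.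
  destruct i as [|[|]]; [| | lia]; simpl; unfold Rdiv; rewrite ?Rplus_0_l, ?Rplus_0_r; ring.
Qed.

Lemma unit_sinr_pos i j y : (i < 2)%nat -> (j < 2)%nat -> 0 <= y -> 0 < unit_sinr i j y.
Proof.
  intros Hi Hj Hy. pose proof noise_pos. apply min_upto_glb_lt. intros k Hk.
  destruct (gain_nonneg_direct_pos i k j Hi Hk Hj). apply Rdiv_lt_0_compat; nra.
Qed.

Lemma unit_sinr_continuous i j y : (i < 2)%nat -> (j < 2)%nat -> 0 <= y ->
  continuity_pt (unit_sinr i j) y.
Proof.
  intros Hi Hj Hy. pose proof noise_pos.
  apply (continuity_pt_min_upto _ (fun y k => g i k i / (g i k j * y + s))).
  intros k Hk. destruct (gain_nonneg_direct_pos i k j Hi Hk Hj). reg. nra.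
Qed.

(* The noise-only SINR [unit_sinr i j 0] stands in for [min_k g i k i / s]. *)
Lemma unit_sinr_ge i j r y : (i < 2)%nat -> (j < 2)%nat ->
  (forall k, (k < K i)%nat -> cross_ratio g i k j <= r) -> 0 <= y ->
  / (r * y + / unit_sinr i j 0) <= unit_sinr i j y.
Proof.
  intros Hi Hj Hr Hy. pose proof noise_pos.
  pose proof (unit_sinr_pos i j 0 Hi Hj ltac:(lra)) as HA0.
  apply min_upto_glb. intros k Hk. destruct (gain_nonneg_direct_pos i k j Hi Hk Hj) as [Hb Ha].
  assert (HK : (1 <= K i)%nat) by (apply Hvalid; exact Hi).
  assert (Hbr : g i k j / g i k i <= r) by (apply Hr; lia).
  assert (HA0le : unit_sinr i j 0 <= g i k i / (g i k j * 0 + s))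
    by (apply (min_upto_le _ (fun k => g i k i / (g i k j * 0 + s))); exact Hk).
  assert (Hinv : s / g i k i <= / unit_sinr i j 0).
  { replace (s / g i k i) with (/ (g i k i / (g i k j * 0 + s))) by (field; lra).
    apply Rinv_le_contravar; assumption. }
  replace (g i k i / (g i k j * y + s)) with (/ (g i k j / g i k i * y + s / g i k i))
    by (field; split; nra).
  apply Rinv_le_contravar.
  - assert (0 <= g i k j / g i k i * y) by (apply Rmult_le_pos; [apply Rle_mult_inv_pos|]; lra).
    assert (0 < s / g i k i) by (apply Rdiv_lt_0_compat; lra). lra.
  - apply Rplus_le_compat; [apply Rmult_le_compat_r|]; assumption.
Qed.

Lemma cross_ratio_nonneg i k j : (i < 2)%nat -> (k < K i)%nat -> (j < 2)%nat ->
  0 <= cross_ratio g i k j.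
Proof.
  intros Hi Hk Hj. destruct (gain_nonneg_direct_pos i k j Hi ltac:(lia) Hj).
  apply Rle_mult_inv_pos; assumption.
Qed.

Section Targets.
Variables (r1 r2 mu0 mu1 : R).
Hypothesis Hr1 : forall k, (k < K 0)%nat -> cross_ratio g 0 k 1 <= r1.
Hypothesis Hr2 : forall k, (k < K 1)%nat -> cross_ratio g 1 k 0 <= r2.
Hypotheses (Hmu0 : 0 <= mu0) (Hmu1 : 0 <= mu1).
Hypothesis Hlt : mu0 * mu1 * (r1 * r2) < 1.

(* SINR of user 1 at power [x] when user 0 gets exactly the power it needs for [mu0]. *)
Definition sinr1_at_target0 (x : R) : R := x * unit_sinr 1 0 (mu0 / unit_sinr 0 1 x).

Let C := r2 * mu0 / unit_sinr 0 1 0 + / unit_sinr 1 0 0.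

Lemma ratio_bounds_nonneg : 0 <= r1 /\ 0 <= r2.
Proof.
  assert (HK0 : (1 <= K 0)%nat) by (apply Hvalid; lia).
  assert (HK1 : (1 <= K 1)%nat) by (apply Hvalid; lia).
  split; eapply Rle_trans;
    [apply (cross_ratio_nonneg 0 0 1) | apply Hr1 | apply (cross_ratio_nonneg 1 0 0) | apply Hr2]; lia.
Qed.

Lemma offset_pos : 0 < C.
Proof.
  pose proof (unit_sinr_pos 0 1 0 ltac:(lia) ltac:(lia) ltac:(lra)).
  pose proof (unit_sinr_pos 1 0 0 ltac:(lia) ltac:(lia) ltac:(lra)).
  pose proof ratio_bounds_nonneg.
  assert (0 <= r2 * mu0 / unit_sinr 0 1 0) by (apply Rle_mult_inv_pos; nra).
  assert (0 < / unit_sinr 1 0 0) by (apply Rinv_0_lt_compat; lra).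
  unfold C; lra.
Qed.

Lemma sinr1_at_target0_continuous x : 0 <= x -> continuity_pt sinr1_at_target0 x.
Proof.
  intro Hx. pose proof (unit_sinr_pos 0 1 x ltac:(lia) ltac:(lia) Hx).
  apply continuity_pt_mult; [apply derivable_continuous_pt, derivable_pt_id|].
  apply (continuity_pt_comp (fun x => mu0 / unit_sinr 0 1 x) (unit_sinr 1 0)).
  - apply continuity_pt_div; [apply continuity_pt_const; intros ? ?; reflexivity
                             | apply unit_sinr_continuous | ]; lra || lia.
  - apply unit_sinr_continuous; [lia | lia | apply Rle_mult_inv_pos; lra].
Qed.

Lemma sinr1_at_target0_ge x : 0 <= x -> x / (r1 * r2 * mu0 * x + C) <= sinr1_at_target0 x.
Proof.
  intro Hx. destruct ratio_bounds_nonneg. pose proof offset_pos.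
  pose proof (unit_sinr_pos 0 1 0 ltac:(lia) ltac:(lia) ltac:(lra)).
  pose proof (unit_sinr_pos 0 1 x ltac:(lia) ltac:(lia) Hx).
  assert (Hinv0 : 0 < / unit_sinr 0 1 0) by (apply Rinv_0_lt_compat; lra).
  assert (Hinv : / unit_sinr 0 1 x <= r1 * x + / unit_sinr 0 1 0).
  { rewrite <- (Rinv_inv (r1 * x + / unit_sinr 0 1 0)).
    apply Rinv_le_contravar; [apply Rinv_0_lt_compat; nra|].
    apply unit_sinr_ge; [lia | lia | exact Hr1 | lra]. }
  set (y := mu0 / unit_sinr 0 1 x).
  assert (0 <= y) by (apply Rle_mult_inv_pos; lra).
  assert (Hy : y <= mu0 * (r1 * x + / unit_sinr 0 1 0)) by (apply Rmult_le_compat_l; assumption).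
  unfold sinr1_at_target0. fold y. unfold Rdiv at 1. apply Rmult_le_compat_l; [exact Hx|].
  eapply Rle_trans; [|apply unit_sinr_ge; [lia | lia | exact Hr2 | assumption]].
  assert (0 < / unit_sinr 1 0 0) by (apply Rinv_0_lt_compat, unit_sinr_pos; lia || lra).
  apply Rinv_le_contravar; [nra|]. unfold C, Rdiv. nra.
Qed.

(* The search interval ends at [M], where the bound [sinr1_at_target0_ge] exceeds [mu1]. *)
Lemma exists_power_for_targets : exists x, 0 <= x /\ sinr1_at_target0 x = mu1.
Proof.
  destruct ratio_bounds_nonneg. pose proof offset_pos.
  set (M := (mu1 * C + 1) / (1 - mu0 * mu1 * (r1 * r2))).
  assert (HM : 0 < M) by (apply Rdiv_lt_0_compat; nra).
  apply (continuous_attains _ M); [lra | | | lra |].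
  - intros x Hx. apply sinr1_at_target0_continuous; lra.
  - unfold sinr1_at_target0; ring.
  - assert (0 <= r1 * r2 * mu0) by (apply Rmult_le_pos; nra).
    assert (HD : 0 < r1 * r2 * mu0 * M + C) by nra.
    assert (Htarget : mu1 * (r1 * r2 * mu0 * M + C) < M).
    { assert (M * (1 - mu0 * mu1 * (r1 * r2)) = mu1 * C + 1) by (unfold M; field; lra). nra. }
    eapply Rlt_le_trans; [|apply sinr1_at_target0_ge; lra].
    apply Rmult_lt_reg_r with (r1 * r2 * mu0 * M + C); [exact HD|].
    field_simplify; lra.
Qed.

Lemma feasible_of_targets_lt mu : mu 0%nat = mu0 -> mu 1%nat = mu1 -> feasible 2 K g s mu.
Proof.
  intros E0 E1. destruct exists_power_for_targets as [x [Hx Ex]].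
  pose proof (unit_sinr_pos 0 1 x ltac:(lia) ltac:(lia) Hx).
  set (p := fun i => match i with 0%nat => mu0 / unit_sinr 0 1 x | _ => x end).
  assert (Hp : nonneg_vec 2 p).
  { intros [|] _; simpl; [apply Rle_mult_inv_pos|]; lra. }
  exists p. split; [exact Hp|]. intros i Hi.
  rewrite sinr_two_users by assumption.
  destruct i as [|[|]]; simpl; [| | lia].
  - rewrite E0. field. lra.
  - rewrite E1, <- Ex. reflexivity.
Qed.

End Targets.

Lemma two_users_feasible_iff k1 k2 mu :
  (k1 < K 0)%nat -> (forall k, (k < K 0)%nat -> cross_ratio g 0 k 1 <= cross_ratio g 0 k1 1) ->
  (k2 < K 1)%nat -> (forall k, (k < K 1)%nat -> cross_ratio g 1 k 0 <= cross_ratio g 1 k2 0) ->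
  nonneg_vec 2 mu ->
  feasible 2 K g s mu <-> mu 0%nat * mu 1%nat * (cross_ratio g 0 k1 1 * cross_ratio g 1 k2 0) < 1.
Proof.
  intros Hk1 Hr1 Hk2 Hr2 Hmu. split.
  - intro Hf. apply (feasible_link_product_lt 2 K g s Hvalid); auto.
  - intro Hlt. apply (feasible_of_targets_lt (cross_ratio g 0 k1 1) (cross_ratio g 1 k2 0)
      (mu 0%nat) (mu 1%nat)); auto; apply Hmu; lia.
Qed.

Lemma two_users_infeasible_convex : convex_set 2 (infeasible 2 K g s).
Proof.
  assert (HK0 : (1 <= K 0)%nat) by (apply Hvalid; lia).
  assert (HK1 : (1 <= K 1)%nat) by (apply Hvalid; lia).
  destruct (exists_argmax_upto (K 0 - 1) (fun k => cross_ratio g 0 k 1)) as [k1 [Hk1 Hr1]].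
  destruct (exists_argmax_upto (K 1 - 1) (fun k => cross_ratio g 1 k 0)) as [k2 [Hk2 Hr2]].
  set (c := cross_ratio g 0 k1 1 * cross_ratio g 1 k2 0).
  assert (Hc : 0 <= c) by (apply Rmult_le_pos; apply cross_ratio_nonneg; lia).
  assert (Hiff : forall v, nonneg_vec 2 v -> feasible 2 K g s v <-> v 0%nat * v 1%nat * c < 1).
  { intros v Hv. apply two_users_feasible_iff; try assumption; try lia;
      intros k Hk; [apply Hr1 | apply Hr2]; lia. }
  assert (Hinf : forall v, infeasible 2 K g s v <-> nonneg_vec 2 v /\ 1 <= v 0%nat * v 1%nat * c).
  { intro v. split; intros [Hv H]; split; try assumption; rewrite (Hiff v Hv) in *; lra. }
  intros x y t Hx Hy Ht z Hz. apply Hinf in Hx as [Hx Hxc]. apply Hinf in Hy as [Hy Hyc].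
  apply Hinf. split.
  - intros i Hi. rewrite Hz by exact Hi.
    pose proof (Hx i Hi). pose proof (Hy i Hi). nra.
  - rewrite !Hz by lia.
    apply hyperbola_superlevel_convex; try apply Hx; try apply Hy; auto; lia.
Qed.

End TwoUsers.

Lemma example_valid s : 0 < s -> valid_system 3 K_ex g_ex s.
Proof.
  intro Hs. unfold K_ex. repeat split; try assumption; try (intros; lia);
    intros i k j Hi Hk Hj || intros i k Hi Hk;
    destruct i as [|[|[|]]]; try lia; destruct k as [|[|]]; try lia;
    try (destruct j as [|[|[|]]]; try lia); simpl; lra.
Qed.

(* [x] violates the pairwise bound for users 0, 1 and [y] for users 1, 2 (at
   the receivers hit hardest by that pair), while the midpoint [z] is the SINR
   vector of the powers [s * (10, 70, 10)]. *)
Lemma example_infeasible_not_convex s : 0 < s -> ~ convex_set 3 (infeasible 3 K_ex g_ex s).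
Proof.
  intros Hs Hconv. pose proof (example_valid s Hs) as Hvalid.
  set (x := fun i : nat => match i with 0%nat => 20/37 | 1%nat => 10 | _ => 0 end).
  set (y := fun i : nat => match i with 0%nat => 0 | 1%nat => 10 | _ => 20/37 end).
  set (z := fun i : nat => match i with 1%nat => 10 | _ => 10/37 end).
  assert (Hx : infeasible 3 K_ex g_ex s x).
  { apply (infeasible_of_link_product 3 K_ex g_ex s Hvalid x 0 1 0 0);
      [intros [|[|[|]]] ?; unfold x; simpl; lra | unfold K_ex; lia .. |].
    unfold x, cross_ratio; simpl; lra. }
  assert (Hy : infeasible 3 K_ex g_ex s y).
  { apply (infeasible_of_link_product 3 K_ex g_ex s Hvalid y 1 2 1 1);
      [intros [|[|[|]]] ?; unfold y; simpl; lra | unfold K_ex; lia .. |].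
    unfold y, cross_ratio; simpl; lra. }
  apply (Hconv x y (1/2) Hx Hy ltac:(lra) z); [intros [|[|[|]]] ?; unfold x, y, z; simpl; lra || lia|].
  exists (fun i => s * match i with 1%nat => 70 | _ => 10 end). split.
  - intros [|[|[|]]] ?; simpl; lra || lia.
  - intros i Hi. unfold sinr, sinr_k, K_ex.
    destruct i as [|[|[|]]]; try lia; cbn [min_upto sum_lt Nat.eqb Nat.sub g_ex z].
    all: unfold z.
    1, 2: rewrite Rmin_left; [field; lra |].
    3: rewrite Rmin_right; [field; lra |].
    all: unfold Rdiv; apply Rmult_le_compat_l; [lra | apply Rinv_le_contravar; lra].
Qed.

Theorem theorem4 :
  (* (i) N = 2 *)
  (forall (K : nat -> nat) (g : nat -> nat -> nat -> R) (sigma2 : R),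
     valid_system 2 K g sigma2 ->
     convex_set 2 (infeasible 2 K g sigma2) /\
     ((forall i k j, (i < 2)%nat -> (k < K i)%nat -> (j < 2)%nat -> 0 < g i k j) ->
      forall k1 k2 : nat,
        (k1 < K 0%nat)%nat ->
        (forall k, (k < K 0%nat)%nat -> g 0%nat k 1%nat / g 0%nat k 0%nat <= g 0%nat k1 1%nat / g 0%nat k1 0%nat) ->
        (k2 < K 1%nat)%nat ->
        (forall k, (k < K 1%nat)%nat -> g 1%nat k 0%nat / g 1%nat k 1%nat <= g 1%nat k2 0%nat / g 1%nat k2 1%nat) ->
        forall mu : nat -> R, nonneg_vec 2 mu ->
          (feasible 2 K g sigma2 mu <->
           mu 0%nat * mu 1%nat <
             (g 0%nat k1 0%nat / g 0%nat k1 1%nat) * (g 1%nat k2 1%nat / g 1%nat k2 0%nat)))) /\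
  (* (ii) N = 3 counterexample *)
  (forall sigma2 : R, 0 < sigma2 ->
     ~ convex_set 3 (infeasible 3 K_ex g_ex sigma2)).
Proof.
  split; [|exact example_infeasible_not_convex].
  intros K g s Hvalid. split; [exact (two_users_infeasible_convex K g s Hvalid)|].
  intros Hpos k1 k2 Hk1 Hr1 Hk2 Hr2 mu Hmu.
  rewrite (two_users_feasible_iff K g s Hvalid k1 k2 mu Hk1 Hr1 Hk2 Hr2 Hmu).
  unfold cross_ratio. apply lt_1_mul_ratios_iff; apply Hpos; lia.
Qed.
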